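(* Let $K_{A_1,B_1},\ldots,K_{A_q,B_q}$ be demand graphs with $|A_i|=\alpha$, $|B_i|=\beta$, reordered such that $\mathrm{mincut}_G(K_{A_1,B_1})< \ldots < \mathrm{mincut}_G(K_{A_q,B_q})$. Then the polynomials $P_{1}, \ldots, P_{q}$ are linearly independent.
   Context: $G=(V,E,w)$ is an undirected edge-weighted graph. For a partition $\Pi$ of $V$, $\Pi(v)$ is the part containing $v$, and $\mathrm{cut}_G(\Pi)=\sum_{uv\in E:\Pi(u)\neq\Pi(v)} w(uv)$. A partition agrees with a demand graph $D$ if every $uv\in D$ has $\Pi(u)\neq\Pi(v)$, and $\mathrm{mincut}_G(D)$ is the minimum of $\mathrm{cut}_G(\Pi)$ over partitions agreeing with $D$. For disjoint $A,B\subseteq V$, $K_{A,B}$ is the complete bipartite demand graph between $A$ and $B$; an optimal partition may be assumed to have two parts. Each vertex $v$ gets a variable $\phi_v$; a two-part partition $\{U,V\setminus U\}$ is viewed as a $0/1$ vector in $\{0,1\}^n$ at which polynomials are evaluated over $\mathbb{F}_2$. For each $j$, fix $a_j\in A_j$, $b_j\in B_j$ and define $P_j=\prod_{b\in B_j}(\phi_{a_j}-\phi_b)\cdot\prod_{a\in A_j\setminus\{a_j\}}(\phi_a-\phi_{b_j})$, a polynomial of degree $\alpha+\beta-1$. A two-part partition agrees with $K_{A_j,B_j}$ iff $P_j$ evaluated at it is nonzero. *)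

From HB Require Import structures.
From mathcomp Require Import all_boot all_order all_algebra.
From mathcomp Require Import mpoly.
Set Implicit Arguments. Unset Strict Implicit. Unset Printing Implicit Defensive.
Import Order.TTheory GRing.Theory Num.Theory.
Local Open Scope ring_scope.

(* Graph G on vertex set 'I_n: the weight of the (undirected) edge {u,v}
   (u < v) is w u v; absent edges have weight 0. Weights are nonnegative
   (hypothesis in the theorem).
   A partition of V is represented by a labelling Pi : 'I_n -> 'I_n
   (vertices with equal labels are in the same part; every partition of an
   n-element set arises this way). *)

Definition cut (R : numDomainType) (n : nat) (w : 'I_n -> 'I_n -> R)
    (Pi : 'I_n -> 'I_n) : R :=
  \sum_(u : 'I_n) \sum_(v : 'I_n | (u < v)%N && (Pi u != Pi v)) w u v.

Definition agrees (n : nat) (D : rel 'I_n) (Pi : 'I_n -> 'I_n) : Prop :=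
  forall u v, D u v -> Pi u != Pi v.

Definition is_mincut (R : numDomainType) (n : nat) (w : 'I_n -> 'I_n -> R)
    (D : rel 'I_n) (m : R) : Prop :=
  (exists Pi, agrees D Pi /\ cut w Pi = m) /\
  (forall Pi, agrees D Pi -> m <= cut w Pi).

Definition Kbip (n : nat) (A B : {set 'I_n}) : rel 'I_n :=
  fun u v => ((u \in A) && (v \in B)) || ((u \in B) && (v \in A)).

Definition Ppoly (n : nat) (A B : {set 'I_n}) (a b : 'I_n) : {mpoly 'F_2[n]} :=
  (\prod_(x in B) ('X_a - 'X_x)) * (\prod_(x in A | x != a) ('X_x - 'X_b)).

From HB Require Import structures.
From mathcomp Require Import all_boot all_order all_algebra.
From mathcomp Require Import mpoly.
Import Order.TTheory GRing.Theory Num.Theory.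
Set Implicit Arguments. Unset Strict Implicit.
Local Open Scope ring_scope.

(* Let i0 be the least index with c i0 <> 0 and let U be the side containing
   A_i0 of an optimal partition for K_{A_i0,B_i0}; it has cut at most
   mincut(K_{A_i0,B_i0}). Evaluated at the indicator of U, P_j is nonzero iff
   U separates A_j from B_j, which holds for j = i0 and fails for j > i0,
   since otherwise mincut(K_{A_j,B_j}) <= cut(U) <= mincut(K_{A_i0,B_i0}).
   Hence evaluating the dependency at U leaves only c i0 P_i0(U) = 0. *)

Lemma mpoly_triangular_free (K : idomainType) (n q : nat)
    (p : 'I_q -> {mpoly K[n]}) :
  (forall i : 'I_q, exists x : 'I_n -> K,
     (p i).@[x] != 0 /\ forall j : 'I_q, (i < j)%N -> (p j).@[x] = 0) ->
  forall c : 'I_q -> K, \sum_(i < q) c i *: p i = 0 -> forall i, c i = 0.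
Proof.
move=> triangular c dep i; apply/eqP/negPn/negP => ci_neq0.
case: (@arg_minnP _ i (fun j => c j != 0) val ci_neq0) => i0 ci0_neq0 i0_min.
have [x [pi0x_neq0 pjx_eq0]] := triangular i0.
have /eqP := congr1 (meval x) dep.
rewrite meval0 raddf_sum (bigD1 i0) //= big1 ?addr0.
  by rewrite mevalZ mulf_eq0 (negbTE ci0_neq0) (negbTE pi0x_neq0).
move=> j j_neq_i0; rewrite mevalZ.
have [->|cj_neq0] := eqVneq (c j) 0; first by rewrite mul0r.
rewrite pjx_eq0 ?mulr0 // ltn_neqAle i0_min // andbT.
by apply: contraNneq j_neq_i0 => /val_inj ->.
Qed.

Definition indic (n : nat) (U : {set 'I_n}) (v : 'I_n) : 'F_2 := (v \in U)%:R.

Lemma subr_indic_eq0 (n : nat) (U : {set 'I_n}) (u v : 'I_n) :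
  (indic U u - indic U v == 0) = ((u \in U) == (v \in U)).
Proof.
rewrite subr_eq0 /indic.
by case: (u \in U); case: (v \in U); rewrite ?eqxx // ?oner_eq0 // eq_sym oner_eq0.
Qed.

Definition separates (n : nat) (U A B : {set 'I_n}) : Prop :=
  forall u v, u \in A -> v \in B -> (u \in U) != (v \in U).

Lemma meval_Ppoly_indic_neq0 (n : nat) (A B U : {set 'I_n}) (a b : 'I_n) :
  a \in A -> b \in B ->
  (Ppoly A B a b).@[indic U] != 0 <-> separates U A B.
Proof.
move=> aA bB; rewrite /Ppoly mevalM !rmorph_prod /= mulf_eq0 negb_or.
have factor x y : meval (indic U) ('X_x - 'X_y) != 0 = ((x \in U) != (y \in U)).
  by rewrite mevalB !mevalXU subr_indic_eq0.
split.
- case/andP=> /prodf_neq0 sep_aB /prodf_neq0 sep_Ab u v uA vB.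
  have := sep_aB v vB; have := sep_aB b bB; rewrite !factor.
  have [->|u_neq_a] := eqVneq u a; first by [].
  have := sep_Ab u; rewrite u_neq_a uA factor => /(_ isT).
  by case: (u \in U); case: (v \in U); case: (a \in U); case: (b \in U).
- move=> sep; apply/andP; split; apply/prodf_neq0 => x.
    by move=> xB; rewrite factor sep.
  by case/andP=> xA _; rewrite factor sep.
Qed.

(* The labelling sending U to a0 and its complement to b0 represents the
   two-part partition {U, V \ U} when a0 != b0. *)
Definition bipartition (n : nat) (U : {set 'I_n}) (a0 b0 : 'I_n) (v : 'I_n)
  : 'I_n := if v \in U then a0 else b0.

Lemma bipartition_neq (n : nat) (U : {set 'I_n}) (a0 b0 u v : 'I_n) :
  a0 != b0 ->
  (bipartition U a0 b0 u != bipartition U a0 b0 v) = ((u \in U) != (v \in U)).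
Proof.
rewrite /bipartition => a0_neq_b0.
by case: (u \in U); case: (v \in U); rewrite ?eqxx // eq_sym.
Qed.

Lemma agrees_bipartition (n : nat) (A B U : {set 'I_n}) (a0 b0 : 'I_n) :
  a0 != b0 -> separates U A B -> agrees (Kbip A B) (bipartition U a0 b0).
Proof.
move=> a0_neq_b0 sep u v; rewrite /Kbip bipartition_neq //.
by case/orP=> /andP[uX vY]; [|rewrite eq_sym]; apply: sep.
Qed.

Lemma cut_coarser (R : numDomainType) (n : nat) (w : 'I_n -> 'I_n -> R)
    (Pi Pi' : 'I_n -> 'I_n) :
  (forall u v, 0 <= w u v) ->
  (forall u v, Pi u = Pi v -> Pi' u = Pi' v) ->
  cut w Pi' <= cut w Pi.
Proof.
move=> w_ge0 coarser; apply: ler_sum => u _.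
rewrite [leLHS]big_mkcond [leRHS]big_mkcond /=; apply: ler_sum => v _.
case: (u < v)%N => //=; have [/coarser->|] := eqVneq (Pi u) (Pi v).
  by rewrite eqxx.
by move=> _; case: ifP; rewrite ?w_ge0.
Qed.

Lemma mincut_separating_set (R : numDomainType) (n : nat)
    (w : 'I_n -> 'I_n -> R) (A B : {set 'I_n}) (a0 b0 : 'I_n) (m : R) :
  (forall u v, 0 <= w u v) -> is_mincut w (Kbip A B) m ->
  exists U, separates U A B /\ cut w (bipartition U a0 b0) <= m.
Proof.
move=> w_ge0 [[Pi [agreePi <-]] _].
pose U := [set v | [exists u in A, Pi u == Pi v]].
exists U; split.
- move=> u v uA vB; rewrite !inE.
  have -> : [exists u' in A, Pi u' == Pi u] by apply/existsP; exists u; rewrite uA eqxx.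
  apply/negP => /existsP[u' /andP[u'A /eqP Pi_u'v]].
  by have := agreePi u' v; rewrite /Kbip u'A vB Pi_u'v eqxx => /(_ isT).
- apply: cut_coarser => // u v Pi_uv; rewrite /bipartition !inE.
  by under eq_existsb => x do rewrite Pi_uv.
Qed.

Unset Implicit Arguments. Set Strict Implicit.
Theorem lemma6 (R : realDomainType) (n : nat) (w : 'I_n -> 'I_n -> R)
  (q alpha beta : nat) (A B : 'I_q -> {set 'I_n}) (a b : 'I_q -> 'I_n)
  (m : 'I_q -> R) :
  (forall u v, 0 <= w u v) ->
  (forall i, [disjoint A i & B i]) ->
  (forall i, #|A i| = alpha) ->
  (forall i, #|B i| = beta) ->
  (forall i, a i \in A i) ->
  (forall i, b i \in B i) ->
  (forall i, is_mincut w (Kbip (A i) (B i)) (m i)) ->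
  (forall i j : 'I_q, (i < j)%N -> m i < m j) ->
  forall c : 'I_q -> 'F_2,
    \sum_(i < q) c i *: Ppoly (A i) (B i) (a i) (b i) = 0 ->
    forall i, c i = 0.
Proof.
move=> w_ge0 disjAB _ _ aA bB mincut m_incr.
apply: mpoly_triangular_free => i.
have ai_neq_bi : a i != b i.
  by apply: contraTneq (aA i) => ->; rewrite (disjointFl (disjAB i) (bB i)).
have [U [sepU cutU]] := mincut_separating_set (a i) (b i) w_ge0 (mincut i).
exists (indic U); split; first exact/meval_Ppoly_indic_neq0.
move=> j ij; apply/eqP/negPn/negP => /meval_Ppoly_indic_neq0 sepUj.
have [_ /(_ _ (agrees_bipartition ai_neq_bi (sepUj (aA j) (bB j))))] := mincut j.
by move=> /le_trans /(_ cutU); rewrite leNgt m_incr.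
Qed.
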